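(* Let $2\le j\le n$ and let $K_j\subset\wedge^j\mathbb{R}^n$ be a proper cone. Suppose there exists a basis $e_1',\ldots,e_n'$ of $\mathbb{R}^n$ such that $K_j\subseteq K_j'$, where $K_j'\subset\wedge^j\mathbb{R}^n$ is an exterior basic cone defined by this basis. Then the set $T(K_j)$, if it is nonempty, is a cone of rank $j$ in $\mathbb{R}^n$.
   Context: A proper cone is a closed convex cone that is pointed and solid. $\wedge^j\mathbb{R}^n$ is the $j$th exterior power of $\mathbb{R}^n$. An exterior basic cone defined by a basis $e_1',\ldots,e_n'$ is a cone in $\wedge^j\mathbb{R}^n$ spanned (as nonnegative linear combinations) by vectors $\sigma_{i_1\ldots i_j}\,(e'_{i_1}\wedge\cdots\wedge e'_{i_j})$, $1\le i_1<\cdots<i_j\le n$, where each sign $\sigma_{i_1\ldots i_j}\in\{1,-1\}$ is fixed. $T(K_j)$ is the closure of the set of all $x_1\in\mathbb{R}^n$ for which there exist $x_2,\ldots,x_j\in\mathbb{R}^n$ with $x_1\wedge\cdots\wedge x_j\in\operatorname{int}(K_j)\cup\operatorname{int}(-K_j)$. A closed subset $T\subset\mathbb{R}^n$ is a cone of rank $k$ if $\alpha x\in T$ for all $x\in T$, $\alpha\in\mathbb{R}$, and $T$ contains at least one $k$-dimensional linear subspace but no linear subspace of dimension greater than $k$. *)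

From HB Require Import structures.
From mathcomp Require Import all_boot all_order all_algebra.
From mathcomp Require Import reals.
Set Implicit Arguments. Unset Strict Implicit. Unset Printing Implicit Defensive.
Import Order.TTheory GRing.Theory Num.Theory.
Local Open Scope ring_scope.

(* Index set of the standard basis e_{i_1} /\ ... /\ e_{i_j} of wedge^j R^n:
   the j-element subsets of {0,...,n-1}. *)
Definition jsub (n j : nat) := {S : {set 'I_n} | #|S| == j}.

(* wedge^j R^n, in coordinates with respect to the standard basis. *)
Definition ext (R : realType) (n j : nat) := jsub n j -> R.

(* For S = {i_1 < ... < i_j}, the increasing enumeration b |-> i_(b+1). *)
Definition jidx (n j : nat) (S : jsub n j) : 'I_j -> 'I_n :=
  fun b => enum_val (cast_ord (esym (eqP (valP S))) b).

(* x_1 /\ ... /\ x_j, where x_k is the k-th row of X: its S-coordinate is the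
   j x j minor of X on the columns i_1 < ... < i_j. *)
Definition wedge (R : realType) (n j : nat) (X : 'M[R]_(j, n)) : ext R n j :=
  fun S => \det (colsub (@jidx n j S) X).

Definition ext_interior (R : realType) (n j : nat) (K : ext R n j -> Prop)
  (w : ext R n j) : Prop :=
  exists2 e : R, 0 < e & forall v : ext R n j,
    (forall S, `|v S - w S| < e) -> K v.

Definition ext_closed (R : realType) (n j : nat) (K : ext R n j -> Prop) : Prop :=
  forall w : ext R n j,
    (forall e : R, 0 < e -> exists v, K v /\ forall S, `|v S - w S| < e) -> K w.

Definition ext_neg (R : realType) (n j : nat) (K : ext R n j -> Prop) :
  ext R n j -> Prop := fun w => K (fun S => - w S).

Definition proper_cone (R : realType) (n j : nat) (K : ext R n j -> Prop) : Prop :=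
  [/\ ext_closed K,
      K (fun _ => 0) /\
      (forall v w, K v -> K w -> K (fun S => v S + w S)),
      (forall (a : R) w, 0 <= a -> K w -> K (fun S => a * w S)),
      (forall w, K w -> K (fun S => - w S) -> forall S, w S = 0)
    & exists w, ext_interior K w].

(* Exterior basic cone defined by the basis e'_1..e'_n (rows of E) and the
   signs sigma_S = (-1)^(sigma S): nonnegative combinations of the vectors
   sigma_S e'_{i_1} /\ ... /\ e'_{i_j}. *)
Definition basic_cone (R : realType) (n j : nat) (E : 'M[R]_n)
  (sigma : jsub n j -> bool) : ext R n j -> Prop :=
  fun w => exists c : jsub n j -> R, (forall S, 0 <= c S) /\
    forall S', w S' = \sum_(S : jsub n j)
        c S * ((-1) ^+ sigma S * wedge (rowsub (@jidx n j S) E) S').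

Definition rv_closure (R : realType) (n : nat) (A : 'rV[R]_n -> Prop)
  (x : 'rV[R]_n) : Prop :=
  forall e : R, 0 < e -> exists y, A y /\ forall i, `|y ord0 i - x ord0 i| < e.

Definition rv_closed (R : realType) (n : nat) (A : 'rV[R]_n -> Prop) : Prop :=
  forall x, rv_closure A x -> A x.

Definition Tset (R : realType) (n j : nat) (K : ext R n j -> Prop) :
  'rV[R]_n -> Prop :=
  rv_closure (fun x => exists X : 'M[R]_(j, n),
     (forall i : 'I_j, val i = 0%N -> row i X = x) /\
     (ext_interior K (wedge X) \/ ext_interior (ext_neg K) (wedge X))).

Definition subspace_in (R : realType) (n : nat) (U : 'M[R]_n)
  (T : 'rV[R]_n -> Prop) : Prop :=
  forall v : 'rV[R]_n, (v <= U)%MS -> T v.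

Definition cone_of_rank (R : realType) (n k : nat) (T : 'rV[R]_n -> Prop) : Prop :=
  [/\ rv_closed T,
      (forall (a : R) x, T x -> T (a *: x)),
      (exists U : 'M[R]_n, \rank U = k /\ subspace_in U T)
    & (forall U : 'M[R]_n, subspace_in U T -> (\rank U <= k)%N)].

From HB Require Import structures.
From mathcomp Require Import all_boot all_order all_algebra.
From mathcomp Require Import perm reals boolp.
From mathcomp Require Import ring lra.
Set Implicit Arguments. Unset Strict Implicit. Unset Printing Implicit Defensive.
Import Order.TTheory GRing.Theory Num.Theory.
Local Open Scope ring_scope.

(* Let Y = X E^-1 be the coordinates of the rows of X in the basis e'.  By
   Cauchy-Binet, the coordinates of x_1 /\ ... /\ x_j along the basic vectors
   e'_{i_1} /\ ... /\ e'_{i_j} are the maximal minors of Y; since the interior of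
   K_j lies in the open orthant of the exterior basic cone, x_1 /\ ... /\ x_j is
   in int K_j or int (-K_j) only if every maximal minor on the columns S has the
   sign eps sigma_S, for a global sign eps.

   Rank at least j: a row operation multiplies the wedge by its determinant, so
   every combination of the rows of such an X with nonzero first coefficient is
   again admissible, and the j-dimensional row space of X lies in T(K_j).

   Rank at most j: a (j+1)-dimensional subspace contains, in e'-coordinates, a
   vector with prescribed entries on j+1 suitable columns; choose their signs
   against the sign pattern and approximate the vector by the first row of an
   admissible Y.  The Laplace expansion along the first row of the square
   matrix with rows Y_0, Y_0, ..., Y_{j-1} on these columns vanishes (a row is
   repeated), yet all its terms then have the same strict sign. *)

Lemma jidx_mem n j (S : jsub n j) b : jidx S b \in val S.
Proof. exact: enum_valP. Qed.

Lemma jidx_inj n j (S : jsub n j) : injective (jidx S).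
Proof. by move=> a b /enum_val_inj /cast_ord_inj. Qed.

Lemma jidx_surj n j (S : jsub n j) x : x \in val S -> exists b, jidx S b = x.
Proof.
move=> Sx; exists (cast_ord (eqP (valP S)) (enum_rank_in Sx x)).
by rewrite /jidx cast_ordK enum_rankK_in.
Qed.

Lemma jsub_eq n j (S T : jsub n j) : (forall b, jidx T b \in val S) -> S = T.
Proof.
move=> TS; apply: val_inj; apply/eqP.
rewrite eq_sym eqEcard (eqP (valP S)) (eqP (valP T)) leqnn andbT.
by apply/subsetP => x /jidx_surj [b <-].
Qed.

Lemma jsub_of_inj n j (h : 'I_j -> 'I_n) : injective h ->
  exists (S : jsub n j) (s : 'S_j), forall b, h b = jidx S (s b).
Proof.
move=> h_inj.
have cardS : #|h @: [set: 'I_j]| == j by rewrite card_imset // cardsT card_ord.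
pose S : jsub n j := exist (fun A : {set 'I_n} => #|A| == j) _ cardS.
have [s0 hs0] : exists s0 : 'I_j -> 'I_j, forall b, h b = jidx S (s0 b).
  suff /fin_all_exists : forall b, exists b', h b = jidx S b' by [].
  move=> b.
  have [b' <-] := @jidx_surj n j S (h b) (imset_f _ (in_setT b)).
  by exists b'.
have s0_inj : injective s0 by move=> a b eq_ab; apply: h_inj; rewrite !hs0 eq_ab.
by exists S, (perm s0_inj) => b; rewrite permE.
Qed.

Section CauchyBinet.
Variables (R : comPzRingType) (j n : nat).

Lemma det_mulmx_ffun (A : 'M[R]_(j, n)) (B : 'M[R]_(n, j)) :
  \det (A *m B) =
  \sum_(f : {ffun 'I_j -> 'I_n}) (\prod_i A i (f i)) * \det (rowsub f B).
Proof.
rewrite /(\det (A *m B)).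
under eq_bigr => s _.
  rewrite (eq_bigr (fun i => \sum_k A i k * B k (s i))); last by move=> i _; rewrite mxE.
  rewrite bigA_distr_bigA big_distrr /=.
  over.
rewrite exchange_big /=; apply: eq_bigr => f _.
rewrite /(\det (rowsub f B)) big_distrr /=; apply: eq_bigr => s _.
rewrite big_split /= mulrCA; congr (_ * (_ * _)).
by apply: eq_bigr => i _; rewrite mxE.
Qed.

Lemma det_rowsub_perm (g : 'I_j -> 'I_n) (s : 'S_j) (B : 'M[R]_(n, j)) :
  \det (rowsub (g \o s) B) = (-1) ^+ s * \det (rowsub g B).
Proof.
have -> : rowsub (g \o s) B = row_perm s (rowsub g B) by apply/matrixP => a b; rewrite !mxE.
by rewrite row_permE det_mulmx det_perm.
Qed.

Lemma det_colsub_perm (g : 'I_j -> 'I_n) (s : 'S_j) (A : 'M[R]_(j, n)) :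
  \det (colsub (g \o s) A) = (-1) ^+ s * \det (colsub g A).
Proof.
have -> : colsub (g \o s) A = col_perm s (colsub g A) by apply/matrixP => a b; rewrite !mxE.
by rewrite col_permE det_mulmx det_perm odd_permV mulrC.
Qed.

Let sorted_ffun (p : jsub n j * 'S_j) : {ffun 'I_j -> 'I_n} :=
  [ffun b => jidx p.1 (p.2 b)].

Let sorted_ffun_inj : injective sorted_ffun.
Proof.
move=> [S s] [T t] /ffunP /= eq_st.
have eq_ST : S = T.
  apply: jsub_eq => b; have := eq_st (t^-1 b)%g.
  by rewrite !ffunE /= permKV => <-; apply: jidx_mem.
subst T; congr (_, _); apply/permP => b.
by have := eq_st b; rewrite !ffunE /= => /jidx_inj.
Qed.

Theorem cauchy_binet (A : 'M[R]_(j, n)) (B : 'M[R]_(n, j)) :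
  \det (A *m B) =
  \sum_(S : jsub n j) \det (colsub (jidx S) A) * \det (rowsub (jidx S) B).
Proof.
pose G (f : {ffun 'I_j -> 'I_n}) := (\prod_i A i (f i)) * \det (rowsub f B).
have -> : \sum_(S : jsub n j) \det (colsub (jidx S) A) * \det (rowsub (jidx S) B)
    = \sum_(p : jsub n j * 'S_j) G (sorted_ffun p).
  rewrite [RHS](eq_bigr (fun p => G (sorted_ffun (p.1, p.2)))); last by case.
  rewrite -(pair_bigA _ (fun S s => G (sorted_ffun (S, s)))) /=.
  apply: eq_bigr => S _; rewrite /(\det (colsub _ A)) big_distrl /=.
  apply: eq_bigr => s _; rewrite /G.
  have -> : rowsub (sorted_ffun (S, s)) B = rowsub (jidx S \o s) B.
    by apply/matrixP => a b; rewrite !mxE ffunE.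
  rewrite det_rowsub_perm [RHS]mulrCA -mulrA; congr (_ * (_ * _)).
  by apply: eq_bigr => i _; rewrite !mxE ffunE.
rewrite det_mulmx_ffun (bigID (mem (sorted_ffun @: [set: jsub n j * 'S_j]))) /=.
rewrite [X in _ + X]big1 ?addr0.
  rewrite big_imset /=; last by move=> p q _ _; apply: sorted_ffun_inj.
  by apply: eq_bigl => p; rewrite in_setT.
move=> f f_unsorted.
have : ~~ injectiveb f.
  apply: contra f_unsorted => /injectiveP /jsub_of_inj [S [s f_Ss]].
  apply/imsetP; exists (S, s); first by rewrite in_setT.
  by apply/ffunP => i; rewrite ffunE f_Ss.
case/injectivePn => i1 [i2 ne_i12 eq_f12].
rewrite (determinant_alternate ne_i12) ?mulr0 // => k.
by rewrite !mxE eq_f12.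
Qed.

End CauchyBinet.

Lemma expand_minors_repeated_row (R : comPzRingType) m n (Y : 'M[R]_(m.+1, n))
    (P : 'I_m.+2 -> 'I_n) :
  \sum_(k < m.+2) (-1) ^+ k * Y 0 (P k) * \det (colsub (P \o lift k) Y) = 0.
Proof.
pose r (a : 'I_m.+2) : 'I_m.+1 := if unlift 0 a is Some a' then a' else 0.
pose M := \matrix_(a, b) Y (r a) (P b).
have detM0 : \det M = 0.
  apply: (@determinant_alternate _ _ _ 0 1) => // b.
  have -> : 1 = lift 0 (0 : 'I_m.+1) by apply: val_inj.
  by rewrite !mxE /r liftK unlift_none.
rewrite -[RHS]detM0 (expand_det_row _ 0); apply: eq_bigr => k _.
rewrite /cofactor !mxE /r unlift_none add0n mulrCA mulrA; congr (_ * \det _).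
by apply/matrixP => a b; rewrite !mxE /r liftK.
Qed.

Lemma minor_signs_no_lift (R : numDomainType) m n (Y : 'M[R]_(m.+1, n))
    (P : 'I_m.+2 -> 'I_n) (eps : bool) (b : 'I_m.+2 -> bool) :
  (forall k, 0 < (-1) ^+ (eps (+) b k) * \det (colsub (P \o lift k) Y)) ->
  ~ (forall k : 'I_m.+2, 0 < (-1) ^+ (odd k (+) b k) * Y 0 (P k)).
Proof.
move=> minor_pos row_pos.
have term_pos (k : 'I_m.+2) :
    0 < (-1) ^+ eps * ((-1) ^+ k * Y 0 (P k) * \det (colsub (P \o lift k) Y)).
  have := mulr_gt0 (row_pos k) (minor_pos k).
  rewrite !signr_addb signr_odd; set s := (-1) ^+ b k.
  have ss : s * s = 1 by rewrite -expr2 sqrr_sign.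
  congr (0 < _); transitivity ((-1) ^+ eps * ((-1) ^+ k * Y 0 (P k) *
    \det (colsub (P \o lift k) Y)) * (s * s)); first ring.
  by rewrite ss mulr1.
suff : 0 < (-1) ^+ eps *
    \sum_(k < m.+2) (-1) ^+ k * Y 0 (P k) * \det (colsub (P \o lift k) Y).
  by rewrite expand_minors_repeated_row mulr0 ltxx.
rewrite mulr_sumr (bigD1 ord0) //= ltr_pwDl ?(term_pos ord0) ?sumr_ge0 // => k _.
exact/ltW.
Qed.

Lemma colsub_surj_rank (F : fieldType) m n k (U : 'M[F]_(m, n)) :
  (k <= \rank U)%N ->
  exists2 P : 'I_k -> 'I_n, injective P &
    forall t : 'rV[F]_k, exists2 u : 'rV[F]_n, (u <= U)%MS & colsub P u = t.
Proof.
move=> le_k_rank.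
pose g := maxrankfun U^T.
have full_g : row_full (colsub g U).
  by rewrite /row_full -mxrank_tr trmx_mxsub; apply: maxrowsub_free.
have le_k_r : (k <= \rank U^T)%N by rewrite mxrank_tr.
exists (g \o widen_ord le_k_r).
  by move=> a b /maxrankfun_inj /(congr1 val) /= /val_inj.
move=> t; pose t' := \row_(a < \rank U^T) oapp (t 0) 0 (insub (val a)).
have /submxP [w def_t'] := submx_full t' full_g.
exists (w *m U); first exact: submxMl.
apply/rowP => a; move/rowP/(_ (widen_ord le_k_r a)): def_t'.
rewrite -mulmx_colsub [t' _ _]mxE /= valK /= => ->.
by rewrite !mxE; apply: eq_bigr => i _; rewrite !mxE.
Qed.

Lemma small_multiple (R : numFieldType) (I : finType) (f : I -> R) e :
  0 < e -> exists2 t, 0 < t & forall i, `|t * f i| < e.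
Proof.
move=> e_gt0; pose M := \sum_i `|f i|.
have M1_gt0 : 0 < M + 1 by rewrite ltr_wpDl ?sumr_ge0.
exists (e / (M + 1)); first by rewrite divr_gt0.
move=> i; rewrite normrM gtr0_norm ?divr_gt0 //.
have le_fM : `|f i| <= M by rewrite /M (bigD1 i) //= lerDl sumr_ge0.
apply: (le_lt_trans (ler_wpM2l _ le_fM)); first by rewrite ltW ?divr_gt0.
by rewrite mulrAC ltr_pdivrMr // ltr_pM2l // ltrDl.
Qed.

Definition basic_wedge (R : realType) n j (E : 'M[R]_n) (T : jsub n j) : ext R n j :=
  wedge (rowsub (jidx T) E).

Definition ext_coord (R : realType) n j (F : 'M[R]_n) (S : jsub n j)
    (w : ext R n j) : R :=
  \sum_(S' : jsub n j) w S' * \det (rowsub (jidx S') (colsub (jidx S) F)).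

Section ExtCoord.
Variables (R : realType) (n j : nat).
Implicit Types (E F : 'M[R]_n) (S T : jsub n j) (w v : ext R n j).

Lemma ext_coord_wedge F S (X : 'M[R]_(j, n)) :
  ext_coord F S (wedge X) = \det (colsub (jidx S) (X *m F)).
Proof. by rewrite -mulmx_colsub cauchy_binet. Qed.

Lemma ext_coord_basic E S T :
  E \in unitmx -> ext_coord (invmx E) S (basic_wedge E T) = (S == T)%:R.
Proof.
move=> E_unit; rewrite ext_coord_wedge mul_rowsub_mx mulmxV //.
have [<-|neST] := eqVneq S T.
  have -> : colsub (jidx S) (rowsub (jidx S) (1%:M : 'M[R]_n)) = 1%:M.
    by apply/matrixP => a b; rewrite !mxE (inj_eq (@jidx_inj n j S)).
  by rewrite det1.
have [a TaS] : exists a, jidx T a \notin val S.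
  apply/existsP; apply: contraR neST; rewrite negb_exists => /forallP TS.
  by apply/eqP/jsub_eq => b; have := TS b; rewrite negbK.
rewrite (expand_det_row _ a) big1 // => b _; rewrite !mxE.
suff /negPf -> : jidx T a != jidx S b by rewrite mul0r.
by apply: contraNneq TaS => ->; apply: jidx_mem.
Qed.

Lemma ext_coord_comb E S w (c : jsub n j -> R) : E \in unitmx ->
  (forall S', w S' = \sum_T c T * basic_wedge E T S') ->
  ext_coord (invmx E) S w = c S.
Proof.
move=> E_unit def_w; rewrite /ext_coord.
under eq_bigr => S' _ do rewrite def_w big_distrl /=.
rewrite exchange_big /= (eq_bigr (fun T => c T * (S == T)%:R)) => [|T _].
  rewrite (bigD1 S) //= eqxx mulr1 big1 ?addr0 // => T neTS.
  by rewrite eq_sym (negPf neTS) mulr0.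
rewrite -(ext_coord_basic S T E_unit) /ext_coord big_distrr /=.
by apply: eq_bigr => S' _; rewrite mulrA.
Qed.

Lemma ext_coord_subZ F S w v (d : R) :
  ext_coord F S (fun S' => w S' - d * v S') = ext_coord F S w - d * ext_coord F S v.
Proof.
rewrite /ext_coord mulr_sumr -sumrB; apply: eq_bigr => S' _.
by rewrite mulrBl mulrA.
Qed.

End ExtCoord.

Definition interior_pm (R : realType) n j (K : ext R n j -> Prop) (w : ext R n j) :=
  ext_interior K w \/ ext_interior (ext_neg K) w.

Definition minors_signed (R : numDomainType) n j (sigma : jsub n j -> bool)
    (eps : bool) (Y : 'M[R]_(j, n)) : Prop :=
  forall S, 0 < (-1) ^+ (eps (+) sigma S) * \det (colsub (jidx S) Y).

Lemma basic_cone_opp (R : realType) n j (E : 'M[R]_n) sigma (w : ext R n j) :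
  basic_cone E sigma (fun S => - w S) -> basic_cone E (fun S => ~~ sigma S) w.
Proof.
move=> [c [c_ge0 def_w]]; exists c; split=> // S'.
rewrite -[w S']opprK def_w -sumrN; apply: eq_bigr => S _.
by rewrite signrN !mulNr mulrN.
Qed.

Section BasicCoordinates.
Variables (R : realType) (n j : nat) (E : 'M[R]_n).
Hypothesis E_unit : E \in unitmx.

Lemma interior_coord_sign sigma (K : ext R n j -> Prop) S w :
  (forall v, K v -> basic_cone E sigma v) -> ext_interior K w ->
  0 < (-1) ^+ sigma S * ext_coord (invmx E) S w.
Proof.
move=> K_basic [e e_gt0 ball_K].
(* Push w slightly against the S-th basic vector: the result stays in K, whose
   S-th signed coordinate is nonnegative. *)
have [t t_gt0 small_t] := small_multiple (basic_wedge E S) e_gt0.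
pose w' S' := w S' - (-1) ^+ sigma S * t * basic_wedge E S S'.
have [c [c_ge0 def_w']] : basic_cone E sigma w'.
  apply/K_basic/ball_K => S'.
  by rewrite /w' addrAC subrr add0r normrN -mulrA normrM normr_sign mul1r.
have : ext_coord (invmx E) S w' = c S * (-1) ^+ sigma S.
  apply: (@ext_coord_comb R n j E S w' (fun T => c T * (-1) ^+ sigma T) E_unit) => S'.
  by rewrite def_w'; apply: eq_bigr => T _; rewrite mulrA.
rewrite ext_coord_subZ ext_coord_basic // eqxx mulr1 => /eqP; rewrite subr_eq => /eqP ->.
by rewrite mulrDr mulrCA signrMK -expr2 sqrr_sign mulr1 ltr_wpDl.
Qed.

Lemma interior_pm_minors_signed sigma (K : ext R n j -> Prop) (X : 'M[R]_(j, n)) :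
  (forall v, K v -> basic_cone E sigma v) -> interior_pm K (wedge X) ->
  exists eps, minors_signed sigma eps (X *m invmx E).
Proof.
move=> K_basic [intK|intNK]; [exists false | exists true] => S; rewrite -ext_coord_wedge.
  exact: interior_coord_sign K_basic intK.
rewrite addTb; apply: (@interior_coord_sign (fun S => ~~ sigma S) _ S _ _ intNK).
by move=> v /K_basic /basic_cone_opp.
Qed.

End BasicCoordinates.

Lemma minors_signed_inj (R : numDomainType) n j (sigma : jsub n j -> bool)
    (h : 'I_j -> 'I_n) :
  injective h -> exists b : bool, forall eps (Y : 'M[R]_(j, n)),
    minors_signed sigma eps Y -> 0 < (-1) ^+ (eps (+) b) * \det (colsub h Y).
Proof.
move=> /jsub_of_inj [S [s def_h]]; exists (s (+) sigma S) => eps Y /(_ S) minor_S.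
have -> : colsub h Y = colsub (jidx S \o s) Y by apply/matrixP => a b; rewrite !mxE def_h.
by rewrite det_colsub_perm addbCA addbC signr_addb -mulrA signrMK.
Qed.

Lemma mulmx_small (R : numFieldType) m n (F : 'M[R]_(m, n)) e : 0 < e ->
  exists2 d, 0 < d & forall v : 'rV[R]_m,
    (forall a, `|v 0 a| < d) -> forall b, `|(v *m F) 0 b| < e.
Proof.
move=> e_gt0; pose M := \sum_a \sum_b `|F a b|.
have M1_gt0 : 0 < M + 1 by rewrite ltr_wpDl ?sumr_ge0 // => a _; rewrite sumr_ge0.
have d_gt0 : 0 < e / (M + 1) by rewrite divr_gt0.
exists (e / (M + 1)) => // v small_v b.
apply: (le_lt_trans (y := e / (M + 1) * M)); last first.
  by rewrite mulrAC ltr_pdivrMr // ltr_pM2l // ltrDl.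
rewrite mxE mulr_sumr (le_trans (ler_norm_sum _ _ _)) // ler_sum // => a _.
rewrite normrM (le_trans (ler_wpM2r _ (ltW (small_v a)))) // ler_wpM2l ?(ltW d_gt0) //.
by rewrite (bigD1 b) //= lerDl sumr_ge0.
Qed.

Lemma sign_near_pos (R : realDomainType) (b : bool) (z : R) :
  `|z - (-1) ^+ b| < 1 -> 0 < (-1) ^+ b * z.
Proof.
move=> near_z.
have -> : (-1) ^+ b * z = 1 + (-1) ^+ b * (z - (-1) ^+ b).
  by rewrite mulrBr -expr2 sqrr_sign addrC subrK.
have := ler_norm (- ((-1) ^+ b * (z - (-1) ^+ b))).
rewrite normrN normrM normr_sign mul1r; lra.
Qed.

Section Closure.
Variables (R : realType) (n : nat) (A : 'rV[R]_n -> Prop).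

Lemma rv_closure_sub x : A x -> rv_closure A x.
Proof. by move=> Ax e e_gt0; exists x; split=> // i; rewrite subrr normr0. Qed.

Lemma rv_closure_closed : rv_closed (rv_closure A).
Proof.
move=> x clx e e_gt0; have e2_gt0 : 0 < e / 2 by rewrite divr_gt0.
have [y [cly near_yx]] := clx _ e2_gt0; have [z [Az near_zy]] := cly _ e2_gt0.
exists z; split=> // i; rewrite -(subrK (y 0 i) (z 0 i)) -addrA.
by rewrite (le_lt_trans (ler_normD _ _)) // (splitr e) ltrD.
Qed.

Lemma rv_closure_scale : (forall a x, a != 0 -> A x -> A (a *: x)) ->
  forall a x, rv_closure A x -> rv_closure A (a *: x).
Proof.
move=> A_scale.
have scale_nz a x : a != 0 -> rv_closure A x -> rv_closure A (a *: x).
  move=> a_nz clx e e_gt0; have ea_gt0 : 0 < e / `|a| by rewrite divr_gt0 ?normr_gt0.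
  have [y [Ay near_yx]] := clx _ ea_gt0.
  exists (a *: y); split=> [|i]; first exact: A_scale.
  by rewrite !mxE -mulrBr normrM mulrC -ltr_pdivlMr ?normr_gt0.
move=> a x clx; have [->|a_nz] := eqVneq a 0; last exact: scale_nz.
rewrite scale0r; apply: rv_closure_closed => e e_gt0.
have [t t_gt0 small_t] := small_multiple (x 0) e_gt0.
exists (t *: x); split=> [|i]; first by apply: scale_nz; rewrite ?gt_eqF.
by rewrite !mxE subr0.
Qed.

End Closure.

Lemma interior_scale (R : realType) n j (K : ext R n j -> Prop) (a : R) w :
  (forall b v, 0 <= b -> K v -> K (fun S => b * v S)) -> 0 < a ->
  ext_interior K w -> ext_interior K (fun S => a * w S).
Proof.
move=> K_scale a_gt0 [e e_gt0 ball_K]; exists (a * e); first exact: mulr_gt0.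
move=> v near_v.
have -> : v = (fun S => a * (a^-1 * v S)).
  by apply/funext => S; rewrite mulrA divff ?mul1r ?gt_eqF.
apply/K_scale/ball_K => [|S]; first exact: ltW.
rewrite -[w S](mulKf (lt0r_neq0 a_gt0)) -mulrBr normrM gtr0_norm ?invr_gt0 //.
by rewrite ltr_pdivrMl.
Qed.

Section InteriorPM.
Variables (R : realType) (n j : nat) (K : ext R n j -> Prop).
Hypothesis K_scale : forall a w, 0 <= a -> K w -> K (fun S => a * w S).

Lemma ext_neg_scale a w : 0 <= a -> ext_neg K w -> ext_neg K (fun S => a * w S).
Proof.
move=> a_ge0 Kw; rewrite /ext_neg.
have -> : (fun S => - (a * w S)) = (fun S => a * - w S).
  by apply/funext => S; rewrite mulrN.
exact: K_scale.
Qed.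

Lemma interior_pm_opp w : interior_pm K w -> interior_pm K (fun S => - w S).
Proof.
case=> [] [e e_gt0 ball_K]; [right | left]; exists e => // v near_v.
  by apply: ball_K => S; rewrite -opprD normrN -[w S]opprK.
rewrite -[v]/(fun S => v S) -(funext (fun S => opprK (v S))).
by apply: (ball_K (fun S => - v S)) => S; rewrite -opprD normrN -[w S]opprK.
Qed.

Lemma interior_pm_scale a w : a != 0 -> interior_pm K w ->
  interior_pm K (fun S => a * w S).
Proof.
have pos_scale b v : 0 < b -> interior_pm K v -> interior_pm K (fun S => b * v S).
  move=> b_gt0 [intK|intNK]; [left | right]; first exact: interior_scale.
  exact: interior_scale ext_neg_scale b_gt0 intNK.
rewrite neq_lt => /orP[a_lt0 /interior_pm_opp|]; last exact: pos_scale.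
have -> : (fun S => a * w S) = (fun S => - a * - w S).
  by apply/funext => S; rewrite mulrNN.
by apply: pos_scale; rewrite oppr_gt0.
Qed.

End InteriorPM.

Definition completable (R : realType) n j (K : ext R n j -> Prop) (x : 'rV[R]_n) :=
  exists X : 'M[R]_(j, n),
    (forall i : 'I_j, val i = 0%N -> row i X = x) /\ interior_pm K (wedge X).

Lemma wedge_mulmx (R : realType) n j (M : 'M[R]_j) (X : 'M[R]_(j, n)) :
  wedge (M *m X) = (fun S => \det M * wedge X S).
Proof. by apply/funext => S; rewrite /wedge -mulmx_colsub det_mulmx. Qed.

Section Completable.
Variables (R : realType) (n m : nat) (K : ext R n m.+1 -> Prop).
Hypothesis K_scale : forall a w, 0 <= a -> K w -> K (fun S => a * w S).

Lemma completable_mulmx (X : 'M[R]_(m.+1, n)) (c : 'rV[R]_m.+1) :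
  c 0 0 != 0 -> interior_pm K (wedge X) -> completable K (c *m X).
Proof.
move=> c00_nz int_X.
pose M : 'M[R]_m.+1 := \matrix_(p, q) if p == 0 then c 0 q else (p == q)%:R.
have detM : \det M = c 0 0.
  rewrite -det_tr det_trig.
    rewrite (bigD1 ord0) //= big1 ?mulr1 => [|i /negPf i_nz]; first by rewrite !mxE.
    by rewrite !mxE i_nz eqxx.
  apply/is_trig_mxP => i k lt_ik; rewrite !mxE.
  have /negPf -> : k != 0 by rewrite -lt0n (leq_trans _ lt_ik).
  by rewrite -val_eqE /= gtn_eqF.
exists (M *m X); split=> [i /eqP i0|].
  have -> : i = 0 by apply/val_inj/eqP.
  by rewrite row_mul; congr (_ *m _); apply/rowP => q; rewrite !mxE.
by rewrite wedge_mulmx detM; apply: interior_pm_scale.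
Qed.

Lemma completable_scale a x : a != 0 -> completable K x -> completable K (a *: x).
Proof.
move=> a_nz [X [X_x int_X]].
rewrite -(X_x 0) // rowE scalemxAl.
by apply: completable_mulmx int_X; rewrite !mxE eqxx mulr1.
Qed.

End Completable.

Section RankBounds.
Variables (R : realType) (n m : nat) (E : 'M[R]_n).
Variables (sigma : jsub n m.+1 -> bool) (K : ext R n m.+1 -> Prop).
Hypotheses (E_unit : E \in unitmx) (K_basic : forall w, K w -> basic_cone E sigma w).

Lemma interior_pm_rank (X : 'M[R]_(m.+1, n)) :
  (m.+1 <= n)%N -> interior_pm K (wedge X) -> \rank X = m.+1.
Proof.
move=> le_jn int_X.
have widen_inj : injective (widen_ord le_jn) by move=> a b /(congr1 val) /= /val_inj.
have [S _] := jsub_of_inj widen_inj.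
have [eps /(_ S) minor_S] := interior_pm_minors_signed E_unit K_basic int_X.
have : \rank (X *m colsub (jidx S) (invmx E)) = m.+1.
  apply: mxrank_unit; rewrite unitmxE unitfE mulmx_colsub.
  by apply: contraTneq minor_S => ->; rewrite mulr0 ltxx.
move=> rank_XS; apply/eqP; rewrite eqn_leq rank_leq_row /=.
by rewrite -[X in (X <= _)%N]rank_XS mxrankM_maxl.
Qed.

Lemma closure_completable_rank_le (U : 'M[R]_n) :
  subspace_in U (rv_closure (completable K)) -> (\rank U <= m.+1)%N.
Proof.
move=> U_T; rewrite leqNgt; apply/negP => rank_gt.
have [P P_inj P_surj] : exists2 P : 'I_m.+2 -> 'I_n, injective P &
    forall t : 'rV[R]_m.+2, exists2 u : 'rV[R]_n, (u <= U *m invmx E)%MS & colsub P u = t.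
  by apply: colsub_surj_rank; rewrite mxrankMfree ?row_free_unit ?unitmx_inv.
have /fin_all_exists [b minor_b] := fun k : 'I_m.+2 =>
  @minors_signed_inj R _ _ sigma _ (inj_comp P_inj (@lift_inj _ k)).
pose tau := \row_(k < m.+2) (-1) ^+ (odd k (+) b k) : 'rV[R]_m.+2.
have [u u_U u_tau] := P_surj tau.
have [d d_gt0 small_F] := mulmx_small (invmx E) (@ltr01 R).
have T_u : rv_closure (completable K) (u *m E).
  by apply: U_T; rewrite -[U](mulmxKV E_unit) submxMr.
have [y [[X [X_y int_X]] near_y]] := T_u d d_gt0.
have [eps minors_X] := interior_pm_minors_signed E_unit K_basic int_X.
apply: (minor_signs_no_lift (fun k => minor_b k eps _ minors_X)) => k.
apply: sign_near_pos.
have <- : u 0 (P k) = (-1) ^+ (odd k (+) b k) by move/rowP/(_ k): u_tau; rewrite !mxE.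
have -> : (X *m invmx E) 0 (P k) = (y *m invmx E) 0 (P k).
  by rewrite -(X_y 0) // -row_mul [in RHS]mxE.
rewrite -(mulmxK E_unit u).
have -> : forall A B : 'rV[R]_n, A 0 (P k) - B 0 (P k) = (A - B) 0 (P k).
  by move=> A B; rewrite !mxE.
rewrite -mulmxBl; apply: small_F => a.
by rewrite mxE [X in _ + X]mxE; apply: near_y.
Qed.

Hypothesis K_scale : forall a w, 0 <= a -> K w -> K (fun S => a * w S).

Lemma completable_subspace x : (m.+1 <= n)%N -> completable K x ->
  exists U : 'M[R]_n, \rank U = m.+1 /\ subspace_in U (rv_closure (completable K)).
Proof.
move=> le_jn [X [_ int_X]]; exists <<X>>%MS.
split=> [|v]; first by rewrite genmxE (interior_pm_rank le_jn int_X).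
rewrite genmxE => /submxP [c ->].
have [c00|c00_nz] := eqVneq (c 0 0) 0; last exact/rv_closure_sub/completable_mulmx.
move=> e e_gt0; have [t t_gt0 small_t] := small_multiple (row 0 X 0) e_gt0.
exists ((c + t *: delta_mx 0 0) *m X); split.
  by apply: completable_mulmx => //; rewrite !mxE c00 eqxx mulr1 add0r gt_eqF.
move=> i; rewrite mulmxDl -scalemxAl -rowE [X in X - _]mxE addrAC subrr add0r.
by rewrite [X in `|X|]mxE; apply: small_t.
Qed.

End RankBounds.

Theorem theorem5 (R : realType) (n j : nat) (K : ext R n j -> Prop) :
  (2 <= j)%N -> (j <= n)%N ->
  proper_cone K ->
  (exists (E : 'M[R]_n) (sigma : jsub n j -> bool),
      E \in unitmx /\ (forall w, K w -> basic_cone E sigma w)) ->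
  (exists x, Tset K x) ->
  cone_of_rank j (Tset K).
Proof.
case: j => [//|m] in K * => _ le_jn [_ _ K_scale _ _] [E [sigma [E_unit K_basic]]] [x Tx].
change (Tset K) with (rv_closure (completable K)) in Tx |- *.
split.
- exact: rv_closure_closed.
- by apply: rv_closure_scale => a y; apply: completable_scale.
- have [y [y_compl _]] := Tx 1 ltr01.
  exact: (completable_subspace E_unit K_basic K_scale le_jn y_compl).
- exact: closure_completable_rank_le E_unit K_basic.
Qed.
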